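(* The generating function $$G_{(213,231)}(x,p,q,y,z)=\sum_{n\ge 0}\ \sum_{\pi\in S_n(213,231)} x^n p^{\operatorname{asc}(\pi)} q^{\operatorname{des}(\pi)} y^{\operatorname{MNA}(\pi)} z^{\operatorname{MND}(\pi)}$$ is equal to $$\frac{1 + x + p x^2 y - p^2 x^2 y + q x^2 z - q^2 x^2 z - p q x^2 y z + p q x^3 y z - p^2 q x^3 y z - p q^2 x^3 y z}{1 - p^2 x^2 y - q^2 x^2 z - p q x^2 y z - p^2 q x^3 y z - p q^2 x^3 y z}.$$
   Context: For $n\ge 0$, $S_n$ denotes the set of permutations $\pi=\pi_1\pi_2\cdots\pi_n$ of $[n]=\{1,\dots,n\}$ ($S_0$ consists of the empty permutation, for which all statistics below are $0$). A permutation $\pi\in S_n$ avoids a pattern $\tau\in S_k$ if there are no indices $i_1<\dots<i_k$ such that $\pi_{i_a}<\pi_{i_b}$ if and only if $\tau_a<\tau_b$; $S_n(\tau,\rho)$ is the set of permutations in $S_n$ avoiding both $\tau$ and $\rho$. $\operatorname{asc}(\pi)$ (resp. $\operatorname{des}(\pi)$) is the number of $i\in[n-1]$ with $\pi_i<\pi_{i+1}$ (resp. $\pi_i>\pi_{i+1}$). $\operatorname{MNA}(\pi)$ is the maximum size of a set $I\subseteq[n-1]$ such that $\pi_i<\pi_{i+1}$ for all $i\in I$ and $|i-j|\ge 2$ for distinct $i,j\in I$; $\operatorname{MND}(\pi)$ is defined analogously with $\pi_i>\pi_{i+1}$. *)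

From mathcomp Require Import all_boot all_order all_algebra all_fingroup.
Set Implicit Arguments. Unset Strict Implicit. Unset Printing Implicit Defensive.
Import GRing.Theory.

(* One-line notation of pi in S_n, with values shifted to 0..n-1
   (order-isomorphic to the usual 1..n). *)
Definition word n (pi : 'S_n) : seq nat := [seq val (pi i) | i <- enum 'I_n].

Definition contains n (pi : 'S_n) (tau : seq nat) : bool :=
  [exists f : {ffun 'I_(size tau) -> 'I_n},
     [forall a : 'I_(size tau), forall b : 'I_(size tau),
        ((a < b) ==> (f a < f b)) &&
        ((pi (f a) < pi (f b)) == (nth 0 tau a < nth 0 tau b))]].

Definition avoids n (pi : 'S_n) (tau : seq nat) : bool := ~~ contains pi tau.

(* position i (0-based, i < n-1) is an ascent / descent *)
Definition is_asc n (pi : 'S_n) (i : nat) : bool :=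
  (i.+1 < n) && (nth 0 (word pi) i < nth 0 (word pi) i.+1).
Definition is_des n (pi : 'S_n) (i : nat) : bool :=
  (i.+1 < n) && (nth 0 (word pi) i > nth 0 (word pi) i.+1).

Definition asc n (pi : 'S_n) : nat := count (is_asc pi) (iota 0 n.-1).
Definition des n (pi : 'S_n) : nat := count (is_des pi) (iota 0 n.-1).

Definition nonadj_ok n (P : nat -> bool) (I : {set 'I_n}) : bool :=
  [forall i in I, P (val i)] &&
  [forall i in I, forall j in I, val j != (val i).+1].

Definition MNA n (pi : 'S_n) : nat :=
  \max_(I : {set 'I_n} | nonadj_ok (is_asc pi) I) #|I|.
Definition MND n (pi : 'S_n) : nat :=
  \max_(I : {set 'I_n} | nonadj_ok (is_des pi) I) #|I|.

Local Open Scope ring_scope.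

(* coefficient of x^n in G_{(213,231)}(x,p,q,y,z) *)
Definition Gcoef (R : comNzRingType) (p q y z : R) (n : nat) : R :=
  \sum_(pi : 'S_n | avoids pi [:: 2; 1; 3]%N && avoids pi [:: 2; 3; 1]%N)
     p ^+ asc pi * q ^+ des pi * y ^+ MNA pi * z ^+ MND pi.

(* numerator and denominator, as polynomials in x *)
Definition Gnum (R : comNzRingType) (p q y z : R) : {poly R} :=
  1 + 'X
  + (p * y - p ^+ 2 * y + q * z - q ^+ 2 * z - p * q * y * z)%:P * 'X ^+ 2
  + (p * q * y * z - p ^+ 2 * q * y * z - p * q ^+ 2 * y * z)%:P * 'X ^+ 3.

Definition Gden (R : comNzRingType) (p q y z : R) : {poly R} :=
  1 - (p ^+ 2 * y + q ^+ 2 * z + p * q * y * z)%:P * 'X ^+ 2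
    - (p ^+ 2 * q * y * z + p * q ^+ 2 * y * z)%:P * 'X ^+ 3.

(* A permutation avoids 213 and 231 iff each entry is the minimum or the maximum of the
   entries from it to the right.  Such a permutation is determined by its ascent word: an
   entry followed by an ascent (or the last entry) equals the number of earlier such
   entries, any other entry is n - 1 minus the number of earlier descents.  Every word of
   length n - 1 arises, so the coefficient of x^n is a sum over {up, down}^(n-1).
   A largest set of pairwise non-adjacent ascents is picked greedily from the left, so all
   four statistics are accumulated by an automaton whose state records whether the last
   ascent, resp. descent, was picked.  The total weights a_m of its words of length m
   satisfy a_(m+3) = (p^2 y + q^2 z + pqyz) a_(m+1) + (p^2 q + p q^2) y z a_m, which is
   the denominator; the numerator collects the first terms. *)

From mathcomp Require Import all_boot all_order all_algebra all_fingroup.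
From mathcomp Require Import zify ring.
Set Implicit Arguments. Unset Strict Implicit. Unset Printing Implicit Defensive.
Import GRing.Theory.

Fixpoint greedy (P : nat -> bool) (k : nat) : bool :=
  P k && (if k is k'.+1 then ~~ greedy P k' else true).

Lemma greedyP P k : greedy P k -> P k.
Proof. by case: k => [|k] /= /andP[]. Qed.

Lemma eq_greedy P Q k : (forall j, j <= k -> P j = Q j) -> greedy P k = greedy Q k.
Proof.
elim: k => [|k IH] PQ /=; first by rewrite PQ.
by rewrite PQ // IH // => j le_jk; apply: PQ; apply: leq_trans le_jk _.
Qed.

Section MaxNonAdjacent.
Variables (n : nat) (P : nat -> bool).

Lemma nonadj_okP (I : {set 'I_n}) :
  reflect ((forall i, i \in I -> P i) /\
           (forall i j, i \in I -> j \in I -> val j != (val i).+1))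
          (nonadj_ok P I).
Proof.
apply: (iffP andP) => [[/forall_inP PI /forall_inP nadjI]|[PI nadjI]].
  by split=> // i j /nadjI /forall_inP; apply.
by split; apply/forall_inP => // i iI; apply/forall_inP => j; apply: nadjI.
Qed.

Definition max_nonadj_below k :=
  \max_(I : {set 'I_n} | nonadj_ok P I && [forall i in I, i < k]) #|I|.

Local Notation F := max_nonadj_below.

Lemma max_nonadj_below0 : F 0 = 0.
Proof.
apply/eqP; rewrite -leqn0; apply/bigmax_leqP => I /andP[_ /forall_inP I_lt0].
by rewrite leqn0 cards_eq0; apply/eqP/setP => i; rewrite inE; apply/negP => /I_lt0.
Qed.

Lemma max_nonadj_below_mono k1 k2 : k1 <= k2 -> F k1 <= F k2.
Proof.
move=> le_k12; apply/bigmax_leqP => I /andP[okI /forall_inP I_lt].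
apply: leq_bigmax_cond; rewrite okI; apply/forall_inP => i /I_lt.
by move/leq_trans; apply.
Qed.

Lemma max_nonadj_below_pick k : k < n -> P k -> (F k.-1).+1 <= F k.+1.
Proof.
move=> lt_kn Pk; pose o := Ordinal lt_kn.
pose A := [pred I : {set 'I_n} | nonadj_ok P I && [forall i in I, i < k.-1]].
have A_gt0 : 0 < #|A|.
  apply/card_gt0P; exists set0; rewrite inE; apply/andP; split.
    by apply/nonadj_okP; split=> i; rewrite inE.
  by apply/forall_inP => i; rewrite inE.
have [I0] := @eq_bigmax_cond _ A (fun I => #|I|) A_gt0.
rewrite inE => /andP[/nonadj_okP[PI0 nadjI0] /forall_inP I0_lt].
rewrite /max_nonadj_below => ->.
have o_notin : o \notin I0 by apply/negP => /I0_lt /=; lia.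
have -> : (#|I0|).+1 = #|o |: I0| by rewrite cardsU1 o_notin.
apply: leq_bigmax_cond.
apply/andP; split; last first.
  by apply/forall_inP => i; rewrite !inE => /orP[/eqP -> //|/I0_lt /=]; lia.
apply/nonadj_okP; split=> [i|i j]; rewrite !inE.
  by case/orP=> [/eqP -> //|/PI0].
case/orP=> [/eqP ->|iI] /orP[/eqP ->|jI]; last exact: nadjI0.
all: try move: (I0_lt _ iI); try move: (I0_lt _ jI); rewrite /=; lia.
Qed.

Lemma max_nonadj_belowS k : k < n ->
  F k.+1 <= maxn (F k) (if P k then (F k.-1).+1 else 0).
Proof.
move=> lt_kn; pose o := Ordinal lt_kn.
apply/bigmax_leqP => I /andP[/nonadj_okP[PI nadjI] /forall_inP I_lt].
have [oI|o_notin] := boolP (o \in I); last first.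
  apply: leq_trans (leq_maxl _ _); apply: leq_bigmax_cond; apply/andP; split.
    exact/nonadj_okP.
  apply/forall_inP => i iI; have := I_lt _ iI; rewrite ltnS leq_eqVlt => /orP[] // /eqP ei.
  by move: o_notin; rewrite (_ : o = i) ?iI //; apply: val_inj.
have Pk : P k := PI o oI.
apply: leq_trans (leq_maxr _ _); rewrite Pk (cardsD1 o I) oI ltnS.
apply: leq_bigmax_cond; apply/andP; split.
  apply/nonadj_okP; split=> [i|i j]; rewrite !inE => /andP[_].
    exact: PI.
  by move=> iI /andP[_]; apply: nadjI.
apply/forall_inP => i; rewrite !inE => /andP[ne_io iI].
have := I_lt _ iI; have := nadjI _ _ iI oI; have : val i != k.
  by apply: contra ne_io => /eqP ei; apply/eqP/val_inj.
rewrite /=; lia.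
Qed.

Lemma max_nonadj_below_greedy k : k <= n -> F k = \sum_(j < k) greedy P j.
Proof.
suff IH : k <= n -> F k = \sum_(j < k) greedy P j /\ F k.-1 = \sum_(j < k.-1) greedy P j.
  by case/IH.
elim: k => [|k IHk] le_kn; first by rewrite big_ord0 max_nonadj_below0.
have [Fk Fk1] := IHk (ltnW le_kn); split; last by rewrite Fk.
have ub := max_nonadj_belowS le_kn; have lb := @max_nonadj_below_pick k le_kn.
have le_Fk := max_nonadj_below_mono (leqnSn k).
rewrite big_ord_recr /= -Fk; case: k => [|k] in IHk le_kn Fk Fk1 ub lb le_Fk *.
  by move: ub lb le_Fk; rewrite max_nonadj_below0 /=; case: (P 0) => /=; lia.
have Fk_split : F k.+1 = F k + greedy P k by rewrite Fk Fk1 big_ord_recr.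
by move: ub lb le_Fk; rewrite /= Fk_split; case: (P k.+1); case: (greedy P k) => /=; lia.
Qed.

End MaxNonAdjacent.

Lemma max_nonadj_greedy n P :
  \max_(I : {set 'I_n} | nonadj_ok P I) #|I| = \sum_(j < n) greedy P j.
Proof.
rewrite -(@max_nonadj_below_greedy n P n) //; apply: eq_bigl => I.
by rewrite (_ : [forall i in I, i < n]) ?andbT //; apply/forall_inP.
Qed.

Definition mna (t : seq bool) : nat := \sum_(k < size t) greedy (nth false t) k.

Lemma mna_widen t m : size t <= m -> \sum_(k < m) greedy (nth false t) k = mna t.
Proof.
move=> le_tm; rewrite /mna (big_ord_widen _ (fun k => nat_of_bool (greedy _ k)) le_tm).
rewrite [RHS]big_mkcond /=; apply: eq_bigr => k _; case: ltnP => // le_tk.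
by apply/eqP; rewrite eqb0; apply/negP => /greedyP; rewrite nth_default.
Qed.

Definition last_picked (t : seq bool) : bool :=
  if size t is k.+1 then greedy (nth false t) k else false.

Lemma greedy_rcons t b k : k < size t ->
  greedy (nth false (rcons t b)) k = greedy (nth false t) k.
Proof.
by move=> lt_kt; apply: eq_greedy => j le_jk; rewrite nth_rcons (leq_ltn_trans le_jk lt_kt).
Qed.

Lemma last_picked_rcons t b : last_picked (rcons t b) = b && ~~ last_picked t.
Proof.
rewrite /last_picked size_rcons; case E: (size t) => [|k] /=;
  by rewrite nth_rcons E ltnn eqxx ?greedy_rcons ?E.
Qed.

Lemma mna_rcons t b : mna (rcons t b) = mna t + (b && ~~ last_picked t).
Proof.
rewrite -last_picked_rcons /mna /last_picked !size_rcons big_ord_recr /=.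
by congr (_ + _); apply: eq_bigr => k _; rewrite greedy_rcons.
Qed.

(* All the greedy choice needs in order to extend [t]: whether its last position was
   picked as an ascent, resp. as a descent. *)
Definition state (t : seq bool) : bool * bool := (last_picked t, last_picked (map negb t)).

Definition step (s : bool * bool) (b : bool) : bool * bool := (b && ~~ s.1, ~~ b && ~~ s.2).

Lemma state_rcons t b : state (rcons t b) = step (state t) b.
Proof. by rewrite /state map_rcons !last_picked_rcons. Qed.

Fixpoint bool_words m : seq (seq bool) :=
  if m is m'.+1 then [seq b :: t | b <- [:: true; false], t <- bool_words m']
  else [:: [::]].

Lemma mem_bool_words m t : (t \in bool_words m) = (size t == m).
Proof.
elim: m t => [|m IHm] t; first by case: t.
apply/allpairsP/idP => [[[b t']] [_ /= t'W ->]|]; first by rewrite /= eqSS -IHm.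
case: t => [|b t] //=; rewrite eqSS -IHm => tW.
by exists (b, t); split=> //; case: b.
Qed.

Lemma uniq_bool_words m : uniq (bool_words m).
Proof.
elim: m => [|m IHm] //; apply: allpairs_uniq => //.
by move=> [b1 t1] [b2 t2] _ _ /= [-> ->].
Qed.

Section PermutationWords.
Variable n : nat.
Implicit Types (pi : 'S_n) (t : seq bool).

Lemma nth_word pi (i : 'I_n) : nth 0 (word pi) i = pi i.
Proof. by rewrite /word (nth_map i) ?size_enum_ord // nth_ord_enum. Qed.

Lemma is_asc_succ pi (i j : 'I_n) : val j = i.+1 -> is_asc pi i = (pi i < pi j).
Proof. by move=> ji; rewrite /is_asc -ji ltn_ord !nth_word. Qed.

Definition asc_word pi : seq bool := [seq is_asc pi k | k <- iota 0 n.-1].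

Lemma size_asc_word pi : size (asc_word pi) = n.-1.
Proof. by rewrite size_map size_iota. Qed.

Lemma nth_asc_word pi x k : k < n.-1 -> nth x (asc_word pi) k = is_asc pi k.
Proof. by move=> lt_kn; rewrite (nth_map 0) ?size_iota // nth_iota. Qed.

Lemma is_ascE pi k : is_asc pi k = nth false (asc_word pi) k.
Proof.
case: (ltnP k n.-1) => [lt_kn|le_nk]; first by rewrite nth_asc_word.
by rewrite nth_default ?size_asc_word // /is_asc; case: ltnP => //=; lia.
Qed.

Lemma is_des_asc pi k : k < n.-1 -> is_des pi k = ~~ is_asc pi k.
Proof.
move=> lt_kn; have lt_k1n : k.+1 < n by lia.
have := nth_word pi (Ordinal lt_k1n); have := nth_word pi (Ordinal (ltnW lt_k1n)).
rewrite /is_des /is_asc lt_k1n /= => -> ->.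
have : pi (Ordinal (ltnW lt_k1n)) != pi (Ordinal lt_k1n).
  by rewrite (inj_eq perm_inj) -val_eqE /= ltn_eqF.
by rewrite -val_eqE /=; lia.
Qed.

Lemma is_desE pi k : is_des pi k = nth false (map negb (asc_word pi)) k.
Proof.
case: (ltnP k n.-1) => lt_kn.
  by rewrite (nth_map false) ?size_asc_word // nth_asc_word // is_des_asc.
by rewrite nth_default ?size_map ?size_iota // /is_des; case: ltnP => [?|//]; lia.
Qed.

Lemma asc_count pi : asc pi = count id (asc_word pi).
Proof. by rewrite /asc /asc_word count_map. Qed.

Lemma des_count pi : des pi = count negb (asc_word pi).
Proof.
rewrite /des /asc_word count_map; apply: eq_in_count => k.
by rewrite mem_iota => /andP[_ lt_kn]; rewrite is_des_asc.
Qed.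

Lemma MNA_mna pi : MNA pi = mna (asc_word pi).
Proof.
rewrite /MNA max_nonadj_greedy -(@mna_widen _ n) ?size_asc_word ?leq_pred //.
by apply: eq_bigr => k _; congr (nat_of_bool _); apply: eq_greedy => j _; rewrite is_ascE.
Qed.

Lemma MND_mna pi : MND pi = mna (map negb (asc_word pi)).
Proof.
rewrite /MND max_nonadj_greedy -(@mna_widen _ n) ?size_map ?size_iota ?leq_pred //.
by apply: eq_bigr => k _; congr (nat_of_bool _); apply: eq_greedy => j _; rewrite is_desE.
Qed.

End PermutationWords.

Section Avoidance.
Variable n : nat.
Implicit Types (pi : 'S_n).

Lemma contains_triple pi (a b c : nat) (i j k : 'I_n) :
  uniq [:: a; b; c] -> i < j < k ->
  [/\ (pi i < pi j) = (a < b), (pi i < pi k) = (a < c) & (pi j < pi k) = (b < c)] ->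
  contains pi [:: a; b; c].
Proof.
move=> abc /andP[ij jk] [ij' ik' jk']; have ik := ltn_trans ij jk.
have flip (u v : 'I_n) (x y : nat) : u < v -> x != y ->
    (pi u < pi v) = (x < y) -> (pi v < pi u) = (y < x).
  move=> uv xy; have : pi u != pi v by rewrite (inj_eq perm_inj) neq_ltn uv.
  by rewrite -val_eqE /=; lia.
have := flip _ _ a b ij; have := flip _ _ a c ik; have := flip _ _ b c jk.
move: abc; rewrite /= !inE negb_or andbT => /andP[/andP[ab ac] bc].
move=> /(_ bc jk') kj' /(_ ac ik') ki' /(_ ab ij') ji'.
apply/existsP; exists [ffun x : 'I_3 => tnth [tuple i; j; k] x].
apply/forallP => -[[|[|[|x]]] hx] //; apply/forallP => -[[|[|[|y]]] hy] //.
all: by rewrite !ffunE /tnth /= ?ltnn ?ij ?jk ?ik ?ij' ?ji' ?ik' ?ki' ?jk' ?kj' ?eqxx.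
Qed.

Lemma contains_triple_inv pi (a b c : nat) : contains pi [:: a; b; c] ->
  exists i j k : 'I_n, [/\ i < j < k, (pi j < pi i) = (b < a), (pi i < pi j) = (a < b),
                          (pi k < pi i) = (c < a) & (pi i < pi k) = (a < c)].
Proof.
case/existsP => f /forallP cmp.
have cmpP (x y : 'I_3) := andP (forallP (cmp x) y).
exists (f (inord 0)), (f (inord 1)), (f (inord 2)).
move: (cmpP (inord 0) (inord 1)) (cmpP (inord 1) (inord 0)) (cmpP (inord 1) (inord 2)).
move: (cmpP (inord 0) (inord 2)) (cmpP (inord 2) (inord 0)).
rewrite !inordK //= => -[_ /eqP ik] [_ /eqP ki] [ij /eqP ij_val] [_ /eqP ji] [jk _].
by rewrite ij jk.
Qed.

Definition suffix_extremal pi : bool :=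
  [forall i : 'I_n, [forall (j : 'I_n | i < j), pi i < pi j]
                    || [forall (j : 'I_n | i < j), pi j < pi i]].

Lemma suffix_extremalP pi (i : 'I_n) : suffix_extremal pi ->
  (forall j : 'I_n, i < j -> pi i < pi j) \/ (forall j : 'I_n, i < j -> pi j < pi i).
Proof. by move/forallP/(_ i)/orP => [/forall_inP|/forall_inP]; [left|right]. Qed.

Lemma suffix_extremalPn pi :
  reflect (exists i j k : 'I_n, [/\ i < j, i < k, pi j < pi i & pi i < pi k])
          (~~ suffix_extremal pi).
Proof.
apply: (iffP idP) => [|[i [j [k [ij ik ji ik']]]]]; last first.
  apply/negP => /(suffix_extremalP i) [] lt_i.
    by have := lt_i _ ij; rewrite ltnNge ltnW.
  by have := lt_i _ ik; rewrite ltnNge ltnW.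
case/forallPn => i; rewrite negb_or => /andP[/forallPn[j] /[!negb_imply] /andP[ij ji]].
case/forallPn => k /[!negb_imply] /andP[ik ki].
have [ne_ij ne_ik] : pi i != pi j /\ pi i != pi k.
  by rewrite !(inj_eq perm_inj) !neq_ltn ij ik.
rewrite -!val_eqE /= in ne_ij ne_ik.
by exists i, j, k; split=> //; lia.
Qed.

Lemma avoids_213_231E pi :
  avoids pi [:: 2; 1; 3] && avoids pi [:: 2; 3; 1] = suffix_extremal pi.
Proof.
apply/idP/idP => [/andP[/negP no213 /negP no231]|ext].
  apply/negPn/suffix_extremalPn => -[i [j [k [ij ik ji ik']]]].
  have [jk|kj|/val_inj jk] := ltngtP j k; last by move: ji ik'; rewrite jk; lia.
    by apply: no213; apply: (@contains_triple _ _ _ _ i j k); rewrite ?ij //; split; lia.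
  by apply: no231; apply: (@contains_triple _ _ _ _ i k j); rewrite ?ik //; split; lia.
apply/andP; split; apply/negP => /contains_triple_inv[i [j [k [/andP[ij jk] ji ij' ki ik]]]];
  move: ext; apply/negP/suffix_extremalPn.
  by exists i, j, k; rewrite ji ik ij (ltn_trans ij jk).
by exists i, k, j; rewrite ki ij' ij (ltn_trans ij jk).
Qed.

End Avoidance.

Lemma leq_sum_ord_prefix (F : nat -> nat) j k : j <= k ->
  \sum_(i < j) F i <= \sum_(i < k) F i.
Proof.
move=> le_jk; rewrite (big_ord_widen _ F le_jk).
by rewrite [X in _ <= X](bigID (fun i : 'I_k => i < j)) leq_addr.
Qed.

Lemma sum_ord_ltn n x : \sum_(v < n) (v < x) = minn n x.
Proof. by elim: n => [|n IHn]; [rewrite big_ord0|rewrite big_ord_recr /= IHn]; lia. Qed.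

Lemma sum_ord_gtn n x : \sum_(v < n) (x < v) = n - minn n x.+1.
Proof. by elim: n => [|n IHn]; [rewrite big_ord0|rewrite big_ord_recr /= IHn]; lia. Qed.

Section Reconstruction.
Variable n : nat.
Implicit Types (pi : 'S_n) (t : seq bool).

Lemma sum_perm_ltn pi (i : 'I_n) : \sum_(j < n) (pi j < pi i) = pi i.
Proof.
have -> : \sum_(j < n) (pi j < pi i) = \sum_(v < n) (v < pi i).
  by rewrite [RHS](reindex_inj (@perm_inj _ pi)).
rewrite sum_ord_ltn.
by have := ltn_ord (pi i); lia.
Qed.

Lemma sum_perm_gtn pi (i : 'I_n) : \sum_(j < n) (pi i < pi j) = n.-1 - pi i.
Proof.
have -> : \sum_(j < n) (pi i < pi j) = \sum_(v < n) (pi i < v).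
  by rewrite [RHS](reindex_inj (@perm_inj _ pi)).
rewrite sum_ord_gtn.
by have := ltn_ord (pi i); lia.
Qed.

(* Position [n - 1] lies past the end of a word of length [n - 1] and reads the default
   [true]: the last entry is counted as followed by an ascent. *)
Definition ups t k := \sum_(j < k) nth true t j.
Definition downs t k := \sum_(j < k) ~~ nth true t j.

Lemma ups_add_downs t k : ups t k + downs t k = k.
Proof.
rewrite /ups /downs -big_split /= -[k in RHS]card_ord -sum1_card.
by apply: eq_bigr => j _; case: nth.
Qed.

Definition word_val t k := if nth true t k then ups t k else n.-1 - downs t k.

Lemma word_val_lt t k : k < n -> word_val t k < n.
Proof. by rewrite /word_val; have := ups_add_downs t k; case: nth; lia. Qed.

Lemma word_val_suffix t j k : size t = n.-1 -> j < k < n ->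
  if nth true t j then word_val t j < word_val t k else word_val t k < word_val t j.
Proof.
move=> size_t /andP[jk kn].
have := ups_add_downs t k; have := ups_add_downs t j.
have := @leq_sum_ord_prefix (fun i => nth true t i) _ _ jk.
have := @leq_sum_ord_prefix (fun i => ~~ nth true t i) _ _ jk.
rewrite /word_val /ups /downs !big_ord_recr /=.
by case: (nth true t j); case: (nth true t k) => /=; lia.
Qed.

Lemma word_val_ltE t j k : size t = n.-1 -> j < k < n ->
  (word_val t j < word_val t k) = nth true t j.
Proof.
by move=> size_t /(word_val_suffix size_t); case: nth => // lt_kj; rewrite ltnNge ltnW.
Qed.

Definition perm_of_word t : 'S_n :=
  insubd (1%g : 'S_n) [ffun i : 'I_n => insubd i (word_val t i)].

Lemma perm_of_wordE t (i : 'I_n) : size t = n.-1 -> perm_of_word t i = word_val t i :> nat.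
Proof.
move=> size_t; pose f := [ffun j : 'I_n => insubd j (word_val t j)].
have f_val (j : 'I_n) : val (f j) = word_val t j.
  by rewrite ffunE insubdK //; apply: word_val_lt.
suff f_inj : injectiveb f.
  by rewrite -pvalE /perm_of_word; have := insubdK (1%g : 'S_n) f_inj => /= ->; apply: f_val.
apply/(@injectiveP _ _ f) => j k /(congr1 val); rewrite !f_val => e.
apply/val_inj; have [jk|kj|//] := ltngtP j k.
  have := word_val_suffix size_t (j := j) (k := k).
  by rewrite jk ltn_ord e ltnn; case: nth => /(_ isT).
have := word_val_suffix size_t (j := k) (k := j).
by rewrite kj ltn_ord e ltnn; case: nth => /(_ isT).
Qed.

Lemma perm_of_word_extremal t : size t = n.-1 -> suffix_extremal (perm_of_word t).
Proof.
move=> size_t; apply/forallP => i; apply/orP.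
case ti: (nth true t i); [left|right]; apply/forall_inP => j ij;
  have := word_val_suffix size_t (j := i) (k := j);
  by rewrite ij ltn_ord ti !perm_of_wordE //; apply.
Qed.

Lemma asc_word_perm_of_word t : size t = n.-1 -> asc_word (perm_of_word t) = t.
Proof.
move=> size_t; apply: (@eq_from_nth _ false); first by rewrite size_asc_word.
rewrite size_asc_word => k lt_kn; have lt_k1n : k.+1 < n by lia.
rewrite nth_asc_word // (@is_asc_succ _ _ (Ordinal (ltnW lt_k1n)) (Ordinal lt_k1n)) //=.
by rewrite !perm_of_wordE //= word_val_ltE ?ltnSn ?lt_k1n // (set_nth_default true) ?size_t.
Qed.

Lemma extremal_ltE pi (j k : 'I_n) : suffix_extremal pi -> j < k ->
  (pi j < pi k) = nth true (asc_word pi) j.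
Proof.
move=> ext jk; have lt_j1n : j.+1 < n by apply: leq_trans (ltn_ord k).
rewrite nth_asc_word ?(@is_asc_succ _ _ j (Ordinal lt_j1n)) //; last by lia.
have jj1 : j < Ordinal lt_j1n by [].
case: (suffix_extremalP j ext) => ext_j; first by rewrite !ext_j.
by rewrite ltnNge (ltnW (ext_j _ jk)) ltnNge (ltnW (ext_j _ jj1)).
Qed.

Lemma extremal_word_val pi (i : 'I_n) : suffix_extremal pi ->
  pi i = word_val (asc_word pi) i :> nat.
Proof.
move=> ext; have le_in : i <= n := ltnW (ltn_ord i).
rewrite /word_val /ups /downs; case ti: (nth true (asc_word pi) i).
  rewrite -sum_perm_ltn (big_ord_widen _ (fun j => nat_of_bool (nth true _ j)) le_in).
  rewrite [RHS]big_mkcond /=; apply: eq_bigr => j _.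
  have [ji|ij|/val_inj ->] := ltngtP j i; last by rewrite ltnn.
    by rewrite extremal_ltE.
  by rewrite ltnNge ltnW // extremal_ltE.
suff -> : \sum_(j < i) ~~ nth true (asc_word pi) j = n.-1 - pi i.
  by have := ltn_ord (pi i); lia.
rewrite -sum_perm_gtn (big_ord_widen _ (fun j => nat_of_bool (~~ nth true _ j)) le_in).
rewrite big_mkcond /=; apply: eq_bigr => j _.
have [ji|ij|/val_inj ->] := ltngtP j i; last by rewrite ltnn.
  rewrite -(extremal_ltE ext ji) -leqNgt leq_eqVlt.
  by rewrite val_eqE (inj_eq perm_inj) -val_eqE gtn_eqF.
by rewrite extremal_ltE // ti.
Qed.

Lemma perm_of_asc_word pi : suffix_extremal pi -> perm_of_word (asc_word pi) = pi.
Proof.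
move=> ext; apply/permP => i; apply/val_inj.
by rewrite /= perm_of_wordE ?size_asc_word // -extremal_word_val.
Qed.

End Reconstruction.

Local Open Scope ring_scope.

Lemma sum_avoiders (R : comNzRingType) n (F : 'S_n -> R) :
  \sum_(pi : 'S_n | avoids pi [:: 2; 1; 3] && avoids pi [:: 2; 3; 1]) F pi =
  \sum_(t <- bool_words n.-1) F (perm_of_word n t).
Proof.
rewrite -big_filter -(big_map (perm_of_word n) xpredT F); apply: perm_big.
apply: uniq_perm; first by rewrite filter_uniq ?index_enum_uniq.
  rewrite map_inj_in_uniq ?uniq_bool_words // => t u.
  rewrite !mem_bool_words => /eqP size_t /eqP size_u e.
  by rewrite -(asc_word_perm_of_word size_t) e asc_word_perm_of_word.
move=> pi; rewrite mem_filter mem_index_enum andbT avoids_213_231E.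
apply/idP/mapP => [ext|[t]].
  by exists (asc_word pi); rewrite ?perm_of_asc_word ?mem_bool_words ?size_asc_word.
by rewrite mem_bool_words => /eqP size_t ->; apply: perm_of_word_extremal.
Qed.

Section Weights.
Variables (R : comNzRingType) (p q y z : R).

Definition word_weight (t : seq bool) : R :=
  p ^+ count id t * q ^+ count negb t * y ^+ mna t * z ^+ mna (map negb t).

Definition step_weight (s : bool * bool) (b : bool) : R :=
  if b then p * (if s.1 then 1 else y) else q * (if s.2 then 1 else z).

Lemma word_weight_rcons t b :
  word_weight (rcons t b) = word_weight t * step_weight (state t) b.
Proof.
rewrite /word_weight /step_weight /state map_rcons !mna_rcons -!cats1 !count_cat /=.
by case: b; case: (last_picked t); case: (last_picked (map negb t));
  rewrite /= ?addn0 ?addn1 ?exprS; ring.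
Qed.

Fixpoint path_weight (s : bool * bool) (t : seq bool) : R :=
  if t is b :: t' then step_weight s b * path_weight (step s b) t' else 1.

Lemma word_weight_cat u t :
  word_weight (u ++ t) = word_weight u * path_weight (state u) t.
Proof.
elim: t u => [|b t IHt] u; first by rewrite cats0 mulr1.
by rewrite -cat_rcons IHt word_weight_rcons state_rcons mulrA.
Qed.

Lemma word_weightE t : word_weight t = path_weight (false, false) t.
Proof.
by rewrite -[t]cat0s word_weight_cat /word_weight /mna /= big_ord0 !expr0 !mul1r.
Qed.

Fixpoint total_weight (m : nat) (s : bool * bool) : R :=
  if m is m'.+1 then
    step_weight s true * total_weight m' (step s true)
    + step_weight s false * total_weight m' (step s false)
  else 1.

Lemma sum_path_weight m s :
  \sum_(t <- bool_words m) path_weight s t = total_weight m s.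
Proof.
elim: m s => [|m IHm] s; first by rewrite big_seq1.
by rewrite big_allpairs_dep big_cons big_seq1 /= -!big_distrr !IHm.
Qed.

Lemma total_weightS m s : total_weight m.+1 s =
  step_weight s true * total_weight m (step s true)
  + step_weight s false * total_weight m (step s false).
Proof. by []. Qed.

Lemma total_weight_rec m s : total_weight m.+3 s =
  (p ^+ 2 * y + q ^+ 2 * z + p * q * y * z) * total_weight m.+1 s
  + (p ^+ 2 * q * y * z + p * q ^+ 2 * y * z) * total_weight m s.
Proof.
elim: m s => [|m IHm] s.
  by case: s => [[] []]; rewrite /= /step_weight /step /=; ring.
rewrite total_weightS !IHm.
by rewrite [total_weight m.+2 s]total_weightS [total_weight m.+1 s]total_weightS; ring.
Qed.

End Weights.

Section Coefficients.
Variables (R : comNzRingType) (p q y z : R).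

Lemma Gcoef_total_weight n : Gcoef p q y z n = total_weight p q y z n.-1 (false, false).
Proof.
rewrite /Gcoef sum_avoiders -sum_path_weight; apply: eq_big_seq => t.
rewrite mem_bool_words => /eqP size_t; rewrite -word_weightE /word_weight.
by rewrite asc_count des_count MNA_mna MND_mna asc_word_perm_of_word.
Qed.

Lemma coef_Gden i : (Gden p q y z)`_i =
  if i == 0%N then 1 else if i == 2%N then - (p ^+ 2 * y + q ^+ 2 * z + p * q * y * z)
  else if i == 3%N then - (p ^+ 2 * q * y * z + p * q ^+ 2 * y * z) else 0.
Proof.
rewrite /Gden !coefB coef1 !coefCM !coefXn.
by case: i => [|[|[|[|i]]]] /=; rewrite ?mulr0 ?mulr1 ?subr0 ?sub0r ?subrr.
Qed.

Lemma coef_Gnum i : (Gnum p q y z)`_i =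
  if i == 0%N then 1 else if i == 1%N then 1
  else if i == 2%N then p * y - p ^+ 2 * y + q * z - q ^+ 2 * z - p * q * y * z
  else if i == 3%N then p * q * y * z - p ^+ 2 * q * y * z - p * q ^+ 2 * y * z else 0.
Proof.
rewrite /Gnum !coefD coef1 coefX !coefCM !coefXn.
by case: i => [|[|[|[|i]]]] /=; rewrite ?mulr0 ?mulr1 ?addr0 ?add0r.
Qed.

End Coefficients.

Theorem theorem8 (R : comNzRingType) (p q y z : R) (n : nat) :
  \sum_(i < n.+1) (Gden p q y z)`_i * Gcoef p q y z (n - i)%N = (Gnum p q y z)`_n.
Proof.
under eq_bigr => i _ do rewrite coef_Gden.
rewrite coef_Gnum; case: n => [|[|[|[|n]]]];
  try by rewrite !big_ord_recl big_ord0 /= !Gcoef_total_weight /=; ring.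
rewrite 5!big_ord_recl big1 /= => [|i _]; last by rewrite mul0r.
by rewrite !Gcoef_total_weight total_weight_rec; ring.
Qed.
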